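(* Let $a,b\in\mathbb{R}\setminus\{0\}$, let $\nu_1,\nu_2:\mathbb{R}^2\to\mathbb{R}$ be smooth, and consider the two-parameter family of Hamiltonians on $(\mathbb{R}^2, dq\wedge dp)$ $$H_{j,t}(q,p)=\frac{a}{2}p^2+\frac{b}{6}q^6+\frac{\nu_1(j,t)}{2}q^2+\frac{\nu_2(j,t)}{4}q^4,$$ where $\nu_1$ satisfies $$\nu_1(0,0)=0,\qquad \frac{\partial \nu_1}{\partial j}(0,0)=0,\qquad \frac{\partial^2 \nu_1}{\partial j^2}(0,0)\neq 0,\qquad \frac{\partial \nu_1}{\partial t}(0,0)\neq 0.$$ Fix $\tau\in\mathbb{R}$ sufficiently close to $0$, and let $j_0^{\pm}=j_0^{\pm}(\tau)$ be real numbers with $\nu_1(j_0^{\pm},\tau)=0$, and assume $\nu_2(j_0^{\pm},\tau)\neq 0$. Then Hamiltonian flip bifurcations (with respect to $j$, at fixed $t=\tau$) of the singularity at the origin occur at $(j,t)=(j_0^{\pm},\tau)$. If $a\,\nu_2(j_0^{\pm},\tau)<0$ the bifurcation is dual, and if $a\,\nu_2(j_0^{\pm},\tau)>0$ it is not dual.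
   Context: A singular point $x$ is stable (in the sense of Lyapunov) if all points in a sufficiently small neighbourhood of $x$ remain close to $x$ under the flow for all time; otherwise it is unstable. It is a centre if all eigenvalues of the linearised system are non-zero and purely imaginary, and a saddle if the linearisation has no purely imaginary eigenvalues ($0$ counted as purely imaginary). The systems are considered modulo the $\mathbb{Z}_2$-action $(q,p)\mapsto(-q,-p)$ (equivalently on the reduced phase space, the cone $\{(u,v,w): 4uv=w^2,\ u,v\ge0\}$ with $u=q^2/2$, $v=p^2/2$, $w=qp$, whose apex corresponds to the origin). Hamiltonian flip bifurcation (for a family depending on a parameter $j$, with the origin a singular point): if the origin is stable and becomes unstable as $j$ passes through $j_0$, while at the same time an additional singularity which is a centre is produced, the origin undergoes a Hamiltonian flip bifurcation at $j=j_0$. If the origin is unstable and becomes stable as $j$ passes through $j_0$, while at the same time an additional singularity which is a saddle is produced, it undergoes a dual Hamiltonian flip bifurcation at $j=j_0$. *)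

From Stdlib Require Import Reals List.
From Coquelicot Require Import Coquelicot.
Open Scope R_scope.

Definition partial (d : bool) (f : R -> R -> R) : R -> R -> R :=
  if d then (fun x y => Derive (fun y' => f x y') y)
  else (fun x y => Derive (fun x' => f x' y) x).

Definition iter_partial (ds : list bool) (f : R -> R -> R) : R -> R -> R :=
  fold_right partial f ds.

Definition smooth2 (f : R -> R -> R) : Prop :=
  forall (ds : list bool) (x y : R),
    ex_derive (fun x' => iter_partial ds f x' y) x /\
    ex_derive (fun y' => iter_partial ds f x y') y /\
    continuous (fun z : R * R => iter_partial ds f (fst z) (snd z)) (x, y).

Definition XHq (H : R -> R -> R) (q p : R) : R := Derive (fun p' => H q p') p.
Definition XHp (H : R -> R -> R) (q p : R) : R := - Derive (fun q' => H q' p) q.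

Definition singular_point (H : R -> R -> R) (q0 p0 : R) : Prop :=
  XHq H q0 p0 = 0 /\ XHp H q0 p0 = 0.

Definition is_solution (H : R -> R -> R) (T : R) (q p : R -> R) : Prop :=
  forall t, 0 <= t <= T ->
    is_derive q t (XHq H (q t) (p t)) /\ is_derive p t (XHp H (q t) (p t)).

Definition dist2 (q1 p1 q2 p2 : R) : R := sqrt ((q1 - q2) ^ 2 + (p1 - p2) ^ 2).

Definition lyap_stable (H : R -> R -> R) (q0 p0 : R) : Prop :=
  forall eps, 0 < eps -> exists delta, 0 < delta /\
    forall (T : R) (q p : R -> R), 0 <= T -> is_solution H T q p ->
      dist2 (q 0) (p 0) q0 p0 < delta ->
      forall t, 0 <= t <= T -> dist2 (q t) (p t) q0 p0 < eps.

Definition J11 H q0 p0 := Derive (fun q' => XHq H q' p0) q0.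
Definition J12 H q0 p0 := Derive (fun p' => XHq H q0 p') p0.
Definition J21 H q0 p0 := Derive (fun q' => XHp H q' p0) q0.
Definition J22 H q0 p0 := Derive (fun p' => XHp H q0 p') p0.

Definition lin_eigenvalue (H : R -> R -> R) (q0 p0 : R) (l : C) : Prop :=
  exists v1 v2 : C, (v1 <> 0%C \/ v2 <> 0%C) /\
    (RtoC (J11 H q0 p0) * v1 + RtoC (J12 H q0 p0) * v2 = l * v1)%C /\
    (RtoC (J21 H q0 p0) * v1 + RtoC (J22 H q0 p0) * v2 = l * v2)%C.

Definition purely_imaginary (l : C) : Prop := Re l = 0.

Definition is_centre (H : R -> R -> R) (q0 p0 : R) : Prop :=
  forall l, lin_eigenvalue H q0 p0 l -> l <> 0%C /\ purely_imaginary l.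

Definition is_saddle (H : R -> R -> R) (q0 p0 : R) : Prop :=
  forall l, lin_eigenvalue H q0 p0 l -> ~ purely_imaginary l.

(* Hf j is the Hamiltonian at parameter j.  [kind] is is_centre (flip) or
   is_saddle (dual flip); [before]/[after] say whether the origin is stable
   before/after passing j0 in the direction s. *)
Definition flip_type (stable_before : bool)
    (kind : (R -> R -> R) -> R -> R -> Prop)
    (Hf : R -> R -> R -> R) (j0 : R) : Prop :=
  exists s : R, (s = 1 \/ s = -1) /\
  exists eta rho : R, 0 < eta /\ 0 < rho /\
    (forall j, - eta < s * (j - j0) < 0 ->
       (if stable_before then lyap_stable (Hf j) 0 0
        else ~ lyap_stable (Hf j) 0 0) /\
       forall q p, dist2 q p 0 0 < rho -> singular_point (Hf j) q p ->
         q = 0 /\ p = 0) /\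
    (forall j, 0 < s * (j - j0) < eta ->
       if stable_before then ~ lyap_stable (Hf j) 0 0
       else lyap_stable (Hf j) 0 0) /\
    (forall eps, 0 < eps -> exists delta, 0 < delta /\
       forall j, 0 < s * (j - j0) < delta ->
         exists q p, ~ (q = 0 /\ p = 0) /\ dist2 q p 0 0 < eps /\
           singular_point (Hf j) q p /\ kind (Hf j) q p).

Definition hamiltonian_flip (Hf : R -> R -> R -> R) (j0 : R) : Prop :=
  flip_type true is_centre Hf j0.

Definition dual_hamiltonian_flip (Hf : R -> R -> R -> R) (j0 : R) : Prop :=
  flip_type false is_saddle Hf j0.

Definition Hfam (a b : R) (nu1 nu2 : R -> R -> R) (tau : R) (j q p : R) : R :=
  a / 2 * p ^ 2 + b / 6 * q ^ 6 + nu1 j tau / 2 * q ^ 2 + nu2 j tau / 4 * q ^ 4.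

From Stdlib Require Import Reals Lra Psatz Ranalysis5 ClassicalEpsilon.
From Coquelicot Require Import Coquelicot.
Open Scope R_scope.

(* Write A = nu1 j tau and B = nu2 j tau.  The singular points of H near the origin are
   the origin and the points (q, 0) with q^2 = X a root of b X^2 + B X + A; at such a
   point the eigenvalues satisfy l^2 = -2 X a (2 b X + B), which has the sign of -a B when
   X is small: a centre if a B > 0, a saddle if a B < 0.  The origin is stable when
   a A > 0, since a H is then a definite conserved energy, and unstable when a A < 0,
   since a solution on the zero energy level (the inverse of the travel time along it)
   escapes.  Because nu1 has a fold at the origin (nu1 ~ c j^2 / 2 + d t), its zeros j0 at
   small t = tau <> 0 are simple, so A changes sign at j0; on the side where A B < 0 the
   quadratic acquires the small root X ~ - A / B, the new centre or saddle. *)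

(** * Real-analysis preliminaries *)

Lemma continuity_pt_of_is_derive (f : R -> R) (x l : R) : is_derive f x l -> continuity_pt f x.
Proof. intros Hd; apply continuity_pt_filterlim, (ex_derive_continuous f); now exists l. Qed.

Lemma constant_of_derive_zero (f : R -> R) (T : R) :
  (forall t, 0 <= t <= T -> is_derive f t 0) -> forall t, 0 <= t <= T -> f t = f 0.
Proof.
  intros Hd t Ht; destruct (Req_dec t 0) as [-> | Ht0]; [easy |].
  destruct (MVT_gen f 0 t (fun _ => 0)) as [c [_ E]].
  - intros x Hx; rewrite Rmin_left, Rmax_right in Hx by lra; apply Hd; lra.
  - intros x Hx; rewrite Rmin_left, Rmax_right in Hx by lra.
    apply (continuity_pt_of_is_derive _ _ 0), Hd; lra.
  - lra.
Qed.

Lemma stays_below (f : R -> R) T L :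
  (forall t, 0 <= t <= T -> continuity_pt f t) -> f 0 < L ->
  (forall t, 0 <= t <= T -> f t <> L) -> forall t, 0 <= t <= T -> f t < L.
Proof.
  intros Hc H0 Hne t Ht.
  destruct (Rlt_le_dec (f t) L) as [| Hge]; [easy | exfalso].
  destruct (Req_dec (f t) L) as [E | NE]; [exact (Hne t Ht E) |].
  assert (Ht0 : 0 < t) by (destruct (Req_dec t 0) as [-> |]; lra).
  destruct (IVT_interv (fun s => f s - L) 0 t) as [c [Hc0 Ec]]; try lra.
  - intros s Hs; apply continuity_pt_minus; [apply Hc; lra | apply continuity_pt_const].
    now intros ? ?.
  - apply (Hne c); lra.
Qed.

Lemma MVT_Rabs (f df : R -> R) (a b R : R) : Rabs a <= R -> Rabs b <= R ->
  (forall x, is_derive f x (df x)) -> exists c, Rabs c <= R /\ f b - f a = df c * (b - a).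
Proof.
  intros Ha Hb Hd; apply Rabs_le_between in Ha, Hb.
  destruct (Req_dec a b) as [<- | Hab]; [exists a; split; [apply Rabs_le_between; lra | ring] |].
  destruct (MVT_gen f a b df) as [c [Hc E]].
  - intros x _; apply Hd.
  - intros x _; apply (continuity_pt_of_is_derive _ _ (df x)), Hd.
  - exists c; split; [| easy]; apply Rabs_le_between; split.
    + apply Rle_trans with (Rmin a b); [apply Rmin_glb |]; lra.
    + apply Rle_trans with (Rmax a b); [| apply Rmax_lub]; lra.
Qed.

Lemma MVT_Rabs_le (f df : R -> R) (a b R K : R) : Rabs a <= R -> Rabs b <= R ->
  (forall x, is_derive f x (df x)) -> (forall x, Rabs x <= R -> Rabs (df x) <= K) ->
  Rabs (f b - f a) <= K * Rabs (b - a).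
Proof.
  intros Ha Hb Hd HK; destruct (MVT_Rabs f df a b R Ha Hb Hd) as [c [Hc ->]].
  rewrite Rabs_mult; apply Rmult_le_compat_r; [apply Rabs_pos | now apply HK].
Qed.

Lemma MVT_Rabs_ge (f df : R -> R) (a b R k : R) : Rabs a <= R -> Rabs b <= R ->
  (forall x, is_derive f x (df x)) -> (forall x, Rabs x <= R -> k <= Rabs (df x)) ->
  k * Rabs (b - a) <= Rabs (f b - f a).
Proof.
  intros Ha Hb Hd Hk; destruct (MVT_Rabs f df a b R Ha Hb Hd) as [c [Hc ->]].
  rewrite Rabs_mult; apply Rmult_le_compat_r; [apply Rabs_pos | now apply Hk].
Qed.

Lemma Rabs_half_close x y : Rabs (x - y) < Rabs y / 2 -> Rabs y / 2 <= Rabs x <= 2 * Rabs y.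
Proof. unfold Rabs; repeat destruct Rcase_abs; lra. Qed.

Lemma Rabs_sign_mult s x : s = 1 \/ s = -1 -> Rabs (s * x) = Rabs x.
Proof. intros [-> | ->]; unfold Rabs; repeat destruct Rcase_abs; lra. Qed.

Lemma simple_zero_ratio (n : R -> R) (j0 D : R) : is_derive n j0 D -> D <> 0 -> n j0 = 0 ->
  exists eta, 0 < eta /\ forall j, j <> j0 -> Rabs (j - j0) < eta ->
    0 < n j / (j - j0) * D /\ Rabs (n j) <= 2 * Rabs D * Rabs (j - j0).
Proof.
  intros Hd HD H0; apply is_derive_Reals in Hd.
  destruct (Hd (Rabs D / 2)) as [eta Heta]; [pose proof (Rabs_pos_lt D HD); lra |].
  exists eta; split; [apply cond_pos |]; intros j Hj Hjr.
  specialize (Heta (j - j0) ltac:(lra) Hjr).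
  replace (j0 + (j - j0)) with j in Heta by ring; rewrite H0, Rminus_0_r in Heta.
  set (rq := n j / (j - j0)) in *.
  assert (Hn : n j = rq * (j - j0)) by (unfold rq; field; lra).
  apply Rabs_def2 in Heta.
  split; [| rewrite Hn, Rabs_mult; apply Rmult_le_compat_r; [apply Rabs_pos |]];
    unfold Rabs in *; destruct (Rcase_abs D); destruct (Rcase_abs rq); nra.
Qed.

Lemma sign_change_at_simple_zero (n : R -> R) (j0 D c : R) :
  is_derive n j0 D -> D <> 0 -> n j0 = 0 -> c <> 0 ->
  exists s eta, (s = 1 \/ s = -1) /\ 0 < eta /\
    (forall j, - eta < s * (j - j0) < 0 -> 0 < c * n j) /\
    (forall j, 0 < s * (j - j0) < eta -> c * n j < 0 /\ Rabs (n j) <= 2 * Rabs D * Rabs (j - j0)).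
Proof.
  intros Hd HD H0 Hc.
  destruct (simple_zero_ratio n j0 D Hd HD H0) as [eta [Heta Hratio]].
  set (s := if Rlt_dec 0 (c * D) then -1 else 1).
  assert (Hs : s = 1 \/ s = -1) by (unfold s; destruct Rlt_dec; auto).
  assert (HcDs : c * D * s < 0).
  { assert (c * D <> 0) by (apply Rmult_integral_contrapositive; easy).
    unfold s; destruct Rlt_dec; lra. }
  assert (Hopp : forall j, s * (j - j0) <> 0 -> Rabs (s * (j - j0)) < eta ->
            c * n j * (s * (j - j0)) < 0 /\ Rabs (n j) <= 2 * Rabs D * Rabs (j - j0)).
  { intros j Hj Hjr; rewrite Rabs_sign_mult in Hjr by easy.
    assert (Hj0 : j - j0 <> 0) by (intros E; rewrite E, Rmult_0_r in Hj; lra).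
    destruct (Hratio j ltac:(lra) Hjr) as [Hpos Hbound]; split; [| easy].
    set (rq := n j / (j - j0)) in *.
    replace (c * n j * (s * (j - j0))) with (c * rq * s * (j - j0) ^ 2) by (unfold rq; field; easy).
    assert (0 < (j - j0) ^ 2) by now apply pow2_gt_0.
    assert (c * rq * s * D ^ 2 < 0).
    { replace (c * rq * s * D ^ 2) with ((c * D * s) * (rq * D)) by ring.
      now apply Rmult_neg_pos. }
    assert (0 < D ^ 2) by now apply pow2_gt_0.
    nra. }
  exists s, eta; split; [easy |]; split; [easy |]; split.
  - intros j Hj; destruct (Hopp j) as [H _]; [lra | rewrite Rabs_left; lra | nra].
  - intros j Hj; destruct (Hopp j) as [H Hb]; [lra | rewrite Rabs_right; lra | split; [nra | easy]].
Qed.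

Lemma sign_persists (f : R -> R) (x c : R) : continuous f x -> 0 < c * f x ->
  exists eta, 0 < eta /\
    forall y, Rabs (y - x) < eta -> 0 < c * f y /\ Rabs (f x) / 2 <= Rabs (f y).
Proof.
  intros Hf Hcf.
  assert (Hfx : 0 < Rabs (f x) / 2) by (assert (f x <> 0) by (intros E; rewrite E in Hcf; lra);
    pose proof (Rabs_pos_lt _ H); lra).
  destruct (Hf (ball (f x) (mkposreal _ Hfx)) (locally_ball _ _)) as [eta Heta].
  exists eta; split; [apply cond_pos |]; intros y Hy.
  specialize (Heta y Hy); change (Rabs (f y - f x) < Rabs (f x) / 2) in Heta.
  apply Rabs_def2 in Heta.
  unfold Rabs in *; destruct (Rcase_abs (f x)); destruct (Rcase_abs (f y)); split; nra.
Qed.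

Lemma strictly_increasing_of_pos_derive (F h : R -> R) u v :
  (forall x, u <= x <= v -> is_derive F x (h x) /\ 0 < h x) ->
  forall x y, u <= x -> x < y -> y <= v -> F x < F y.
Proof.
  intros Hd x y Hx Hxy Hy.
  destruct (MVT_gen F x y h) as [c [Hc E]].
  - intros z Hz; rewrite Rmin_left, Rmax_right in Hz by lra; apply Hd; lra.
  - intros z Hz; rewrite Rmin_left, Rmax_right in Hz by lra.
    apply (continuity_pt_of_is_derive _ _ (h z)), Hd; lra.
  - rewrite Rmin_left, Rmax_right in Hc by lra.
    assert (0 < h c) by (apply Hd; lra). nra.
Qed.

Lemma increasing_inverse (F : R -> R) u v : u < v ->
  (forall x, u <= x <= v -> continuity_pt F x) ->
  (forall x y, u <= x -> x < y -> y <= v -> F x < F y) ->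
  exists G : R -> R, (forall t, F u <= t <= F v -> u <= G t <= v /\ F (G t) = t) /\
    (forall x, u <= x <= v -> G (F x) = x).
Proof.
  intros Huv Hcont Hinc.
  assert (Hle : forall x y, u <= x -> x <= y -> y <= v -> F x <= F y).
  { intros x y Hx Hxy Hy; destruct (Req_dec x y) as [-> | Hne]; [lra |].
    apply Rlt_le, Hinc; lra. }
  set (G := fun t => epsilon (inhabits 0) (fun x => u <= x <= v /\ F x = t)).
  assert (HG : forall t, F u <= t <= F v -> u <= G t <= v /\ F (G t) = t).
  { intros t Ht; apply (epsilon_spec (inhabits 0) (fun x => u <= x <= v /\ F x = t)).
    destruct (f_interv_is_interv F u v t Huv Ht Hcont) as [x Hx]; now exists x. }
  exists G; split; [exact HG |].
  intros x Hx; destruct (HG (F x)) as [HGx E]; [split; apply Hle; lra |].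
  destruct (Rtotal_order (G (F x)) x) as [L | [L | L]]; [| easy |];
    [specialize (Hinc (G (F x)) x) | specialize (Hinc x (G (F x)))]; lra.
Qed.

Lemma inverse_on_interval (F h : R -> R) u v : u < v ->
  (forall x, u <= x <= v -> is_derive F x (h x) /\ 0 < h x) ->
  exists G : R -> R, (forall x, u <= x <= v -> G (F x) = x) /\
    forall t, F u < t < F v -> u < G t < v /\ is_derive G t (/ h (G t)).
Proof.
  intros Huv Hd.
  pose proof (strictly_increasing_of_pos_derive F h u v Hd) as Hinc.
  assert (Hcont : forall x, u <= x <= v -> continuity_pt F x)
    by (intros x Hx; apply (continuity_pt_of_is_derive _ _ (h x)), Hd; lra).
  destruct (increasing_inverse F u v Huv Hcont Hinc) as [G [HG HGF]].
  exists G; split; [exact HGF |].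
  intros t Ht; destruct (HG t) as [[HGu HGv] HFG]; [lra |].
  assert (HGt : u < G t < v).
  { assert (G t <> u) by (intros E; rewrite E in HFG; lra).
    assert (G t <> v) by (intros E; rewrite E in HFG; lra). lra. }
  split; [exact HGt |].
  assert (Prf : forall x, G (F u) <= x <= G (F v) -> derivable_pt F x).
  { rewrite !HGF by lra; intros x Hx; exists (h x); apply is_derive_Reals, Hd; lra. }
  assert (Prg : G (F u) <= G t <= G (F v)) by (rewrite !HGF by lra; lra).
  assert (Dv : derive_pt F (G t) (Prf (G t) Prg) = h (G t))
    by (apply derive_pt_eq_0, is_derive_Reals, Hd; lra).
  assert (Hh : 0 < h (G t)) by (apply Hd; lra).
  apply is_derive_Reals.
  replace (/ h (G t)) with (1 / derive_pt F (G t) (Prf (G t) Prg)) by (rewrite Dv; field; lra).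
  apply derivable_pt_lim_recip_interv; [| apply Hinc; lra | easy | | rewrite Dv; lra].
  - apply (continuity_pt_recip_interv F G u v Huv Hinc); try easy;
      intros x Hx1 Hx2; apply (HG x (conj Hx1 Hx2)).
  - intros x Hx; apply (HG x Hx).
Qed.

Lemma is_derive_RInt_open (h : R -> R) u v x0 x : u < x0 < v -> u < x < v ->
  (forall z, u < z < v -> continuous h z) -> is_derive (fun y => RInt h x0 y) x (h x).
Proof.
  intros Hx0 Hx Hc; apply (is_derive_RInt h _ x0 x); [| apply Hc; lra].
  apply (locally_interval _ x u v); try easy.
  intros y Hu Hv; simpl in Hu, Hv; apply (RInt_correct h), ex_RInt_continuous.
  intros z Hz; apply Hc; split.
  - apply Rlt_le_trans with (Rmin x0 y); [apply Rmin_glb_lt |]; lra.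
  - apply Rle_lt_trans with (Rmax x0 y); [| apply Rmax_lub_lt]; lra.
Qed.

Lemma autonomous_ode_solution (f : R -> R) (u v x0 x1 : R) : u < x0 -> x0 < x1 -> x1 < v ->
  (forall x, u < x < v -> 0 < f x /\ continuous f x) ->
  exists T (y : R -> R), 0 < T /\ y 0 = x0 /\ y T = x1 /\
    forall t, 0 <= t <= T -> u < y t < v /\ is_derive y t (f (y t)).
Proof.
  intros H0 H1 H2 Hf.
  (* y is the inverse of the travel time F x = int_x0^x dz / f z *)
  set (F := fun x => RInt (fun z => / f z) x0 x).
  set (u' := (u + x0) / 2); set (v' := (x1 + v) / 2).
  assert (HF : forall x, u' <= x <= v' -> is_derive F x (/ f x) /\ 0 < / f x).
  { intros x Hx; assert (u < x < v) by (unfold u', v' in Hx; lra).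
    split; [| now apply Rinv_0_lt_compat, Hf].
    apply (is_derive_RInt_open (fun z => / f z) u v); [lra | easy |].
    intros z Hz; apply continuous_Rinv_comp; apply Hf in Hz; [easy | lra]. }
  destruct (inverse_on_interval F (fun x => / f x) u' v') as [G [HGF HG]];
    [unfold u', v'; lra | exact HF |].
  pose proof (strictly_increasing_of_pos_derive F _ u' v' HF) as Hinc.
  assert (HF0 : F x0 = 0) by (unfold F; rewrite RInt_point; easy).
  exists (F x1), G; split; [| split; [| split]].
  - rewrite <- HF0; apply Hinc; unfold u', v'; lra.
  - rewrite <- HF0; apply HGF; unfold u', v'; lra.
  - apply HGF; unfold u', v'; lra.
  - intros t Ht.
    assert (F u' < F x0 /\ F x1 < F v') by (split; apply Hinc; unfold u', v'; lra).
    destruct (HG t) as [HGt D]; [lra |].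
    split; [unfold u', v' in HGt; lra |].
    now rewrite Rinv_inv in D.
Qed.

Lemma higher_order_dominated (k c4 c6 : R) : 0 < k ->
  exists r, 0 < r <= 1 /\
    forall X, 0 <= X <= r -> Rabs (c4 * X ^ 2 + c6 * X ^ 3) <= k * X.
Proof.
  intros Hk; set (S := Rabs c4 + Rabs c6).
  pose proof (Rabs_pos c4); pose proof (Rabs_pos c6).
  exists (Rmin 1 (k / (S + 1))); split.
  { split; [apply Rmin_pos; [lra | apply Rdiv_lt_0_compat; unfold S; lra] | apply Rmin_l]. }
  intros X [HX0 HXr].
  assert (HX1 : X <= 1) by (pose proof (Rmin_l 1 (k / (S + 1))); lra).
  assert (HXk : X * (S + 1) <= k).
  { replace k with (k / (S + 1) * (S + 1)) by (field; unfold S; lra).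
    apply Rmult_le_compat_r; [unfold S; lra |].
    pose proof (Rmin_r 1 (k / (S + 1))); lra. }
  eapply Rle_trans; [apply Rabs_triang |].
  rewrite !Rabs_mult, !(Rabs_right (X ^ _)) by (apply Rle_ge, pow_le; lra).
  assert (X ^ 3 <= X ^ 2) by (simpl; nra).
  unfold S in HXk; nra.
Qed.

Lemma quadratic_small_root b A B X1 : A * B < 0 -> 0 < X1 -> 4 * Rabs b * X1 <= Rabs B ->
  2 * Rabs A < Rabs B * X1 ->
  exists X, 0 < X <= X1 /\ b * X ^ 2 + B * X + A = 0 /\ 0 < B * (2 * b * X + B).
Proof.
  intros HAB HX1 Hb HA.
  assert (HB : 0 < Rabs B) by (apply Rabs_pos_lt; intros ->; lra).
  assert (EB : B * B = Rabs B * Rabs B)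
    by (rewrite <- Rabs_mult; symmetry; apply Rabs_pos_eq; nra).
  assert (HbB : forall X, 0 <= X <= X1 -> Rabs (b * B * X) <= B * B / 4).
  { intros X HX; rewrite !Rabs_mult, (Rabs_pos_eq X) by lra.
    assert (Rabs b * X <= Rabs b * X1) by (apply Rmult_le_compat_l; [apply Rabs_pos | lra]).
    rewrite EB; nra. }
  set (P := fun X => b * X ^ 2 + B * X + A).
  assert (HP1 : 0 < B * P X1).
  { pose proof (HbB X1 (conj (Rlt_le _ _ HX1) (Rle_refl _))) as H1.
    apply Rabs_le_between in H1 as [H1 _].
    assert (- (Rabs A * Rabs B) <= A * B)
      by (pose proof (Rle_abs (- (A * B))); rewrite Rabs_Ropp, Rabs_mult in *; lra).
    assert (2 * Rabs A * Rabs B < Rabs B * X1 * Rabs B) by (apply Rmult_lt_compat_r; lra).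
    assert (- (B * B / 4) * X1 <= b * B * X1 * X1) by (apply Rmult_le_compat_r; lra).
    unfold P; nra. }
  destruct (IVT_cor P 0 X1) as [X [HX HPX]]; [intros x; unfold P; reg | lra | |].
  { assert (0 < B * B) by nra.
    replace (P 0) with A by (unfold P; ring). nra. }
  assert (HX0 : X <> 0).
  { intros ->; unfold P in HPX; replace (b * 0 ^ 2 + B * 0 + A) with A in HPX by ring.
    rewrite HPX in HAB; lra. }
  exists X; split; [lra |]; split; [exact HPX |].
  pose proof (HbB X HX) as H1; apply Rabs_le_between in H1; nra.
Qed.

(** * Planar Hamiltonian systems *)

Lemma dist2_origin_lt_sqrt q p K : dist2 q p 0 0 < sqrt K <-> q ^ 2 + p ^ 2 < K.
Proof.
  unfold dist2; rewrite !Rminus_0_r; split.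
  - apply sqrt_lt_0_alt.
  - intros H; apply sqrt_lt_1_alt; split; [nra | easy].
Qed.

Lemma Rabs_le_dist2_origin q p : Rabs q <= dist2 q p 0 0.
Proof.
  unfold dist2; rewrite !Rminus_0_r, <- sqrt_Rsqr_abs.
  apply sqrt_le_1_alt; unfold Rsqr; nra.
Qed.

Lemma solution_sq_norm_continuous H T q p : is_solution H T q p ->
  forall t, 0 <= t <= T -> continuity_pt (fun s => q s ^ 2 + p s ^ 2) t.
Proof.
  intros Hs t Ht; destruct (Hs t Ht) as [Dq Dp].
  apply continuity_pt_filterlim, (ex_derive_continuous (fun s => q s ^ 2 + p s ^ 2)).
  auto_derive; repeat split; eexists; eassumption.
Qed.

Lemma lyap_stable_of_conserved H (V : R -> R -> R) r m C : 0 < r -> 0 < m ->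
  (forall x y, x ^ 2 + y ^ 2 <= r -> m * (x ^ 2 + y ^ 2) <= V x y <= C * (x ^ 2 + y ^ 2)) ->
  (forall T q p, is_solution H T q p ->
     forall t, 0 <= t <= T -> V (q t) (p t) = V (q 0) (p 0)) ->
  lyap_stable H 0 0.
Proof.
  intros Hr Hm HV Hcons eps Heps.
  set (L := Rmin (eps ^ 2) r).
  assert (HL : 0 < L) by (apply Rmin_pos; nra).
  assert (HLe : L <= eps ^ 2) by apply Rmin_l.
  assert (HLr : L <= r) by apply Rmin_r.
  pose proof (Rabs_pos C) as HC0; pose proof (Rle_abs C) as HC1.
  set (K := m * L / (Rabs C + m)).
  assert (HKL : K * (Rabs C + m) = m * L) by (unfold K; field; lra).
  assert (HK : 0 < K) by (unfold K; apply Rdiv_lt_0_compat; nra).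
  assert (HKL' : K <= L) by (apply (Rmult_le_reg_r (Rabs C + m)); nra).
  exists (sqrt K); split; [now apply sqrt_lt_R0 |].
  intros T q p _ Hs Hstart t Ht.
  apply dist2_origin_lt_sqrt in Hstart.
  (* V (q 0) (p 0) < m L, while V >= m L on the circle q^2 + p^2 = L *)
  assert (HV0 : V (q 0) (p 0) < m * L).
  { destruct (HV (q 0) (p 0)) as [_ Hup]; [lra |].
    pose proof (pow2_ge_0 (q 0)); pose proof (pow2_ge_0 (p 0)); nra. }
  assert (Hbelow : q t ^ 2 + p t ^ 2 < L).
  { apply (stays_below (fun s => q s ^ 2 + p s ^ 2) T L); try easy.
    - apply (solution_sq_norm_continuous H); easy.
    - nra.
    - intros s Hs0 E; destruct (HV (q s) (p s) ltac:(lra)) as [Hlow _].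
      rewrite (Hcons T q p Hs s Hs0), E in Hlow; lra. }
  rewrite <- (sqrt_pow2 eps) by lra; apply dist2_origin_lt_sqrt; lra.
Qed.

Lemma not_lyap_stable_of_escape H eps : 0 < eps ->
  (forall delta, 0 < delta -> exists T q p, 0 <= T /\ is_solution H T q p /\
     dist2 (q 0) (p 0) 0 0 < delta /\ eps <= Rabs (q T)) ->
  ~ lyap_stable H 0 0.
Proof.
  intros Heps Hesc Hst.
  destruct (Hst eps Heps) as [delta [Hdelta Hstay]].
  destruct (Hesc delta Hdelta) as [T [q [p [HT [Hs [Hstart Hend]]]]]].
  specialize (Hstay T q p HT Hs Hstart T (conj HT (Rle_refl T))).
  pose proof (Rabs_le_dist2_origin (q T) (p T)); lra.
Qed.

Lemma lin_eigenvalue_sq H q0 p0 l :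
  J11 H q0 p0 = 0 -> J22 H q0 p0 = 0 -> J12 H q0 p0 <> 0 -> lin_eigenvalue H q0 p0 l ->
  (l * l = RtoC (J12 H q0 p0 * J21 H q0 p0))%C.
Proof.
  intros H11 H22 H12 [v1 [v2 [Hv [E1 E2]]]].
  rewrite H11 in E1; rewrite H22 in E2.
  set (c12 := J12 H q0 p0) in *; set (c21 := J21 H q0 p0) in *.
  assert (Hc12 : RtoC c12 <> 0%C) by (intros E; apply H12; now injection E).
  assert (Hv1 : v1 <> 0%C).
  { intros ->; destruct Hv as [Hv | Hv]; [easy |].
    apply Hv; replace v2 with (/ RtoC c12 * (RtoC c12 * v2))%C by (field; easy).
    replace (RtoC c12 * v2)%C with (l * 0)%C by (rewrite <- E1; ring). ring. }
  assert (E : ((l * l - RtoC (c12 * c21)) * v1 = 0)%C).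
  { rewrite RtoC_mult.
    replace ((l * l - RtoC c12 * RtoC c21) * v1)%C
      with (l * (l * v1) - RtoC c12 * (RtoC c21 * v1))%C by ring.
    rewrite <- E1.
    replace (RtoC c21 * v1)%C with (l * v2)%C by (rewrite <- E2; ring). ring. }
  replace (l * l)%C with ((l * l - RtoC (c12 * c21)) * v1 / v1 + RtoC (c12 * c21))%C
    by (field; easy).
  rewrite E; unfold Cdiv; ring.
Qed.

Lemma Cmul_self_neg_imaginary (l : C) r :
  (l * l = RtoC r)%C -> r < 0 -> l <> 0%C /\ purely_imaginary l.
Proof.
  destruct l as [x y]; unfold Cmult, RtoC, purely_imaginary; simpl.
  intros E Hr; injection E as E1 E2; split.
  - intros Z; injection Z as -> ->; lra.
  - destruct (Req_dec x 0) as [| Hx]; [easy |].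
    assert (y = 0) by (apply (Rmult_eq_reg_l (2 * x)); lra). subst; nra.
Qed.

Lemma Cmul_self_pos_not_imaginary (l : C) r :
  (l * l = RtoC r)%C -> 0 < r -> ~ purely_imaginary l.
Proof.
  destruct l as [x y]; unfold Cmult, RtoC, purely_imaginary; simpl.
  intros E Hr Hx; injection E as E1 E2; subst; nra.
Qed.

(** * The normal form *)

(* [Hfam a b nu1 nu2 tau j] is convertible to [ham a b (nu1 j tau) (nu2 j tau)]. *)
Definition ham (a b A B : R) (q p : R) : R :=
  a / 2 * p ^ 2 + b / 6 * q ^ 6 + A / 2 * q ^ 2 + B / 4 * q ^ 4.

Lemma XHq_ham a b A B q p : XHq (ham a b A B) q p = a * p.
Proof. apply is_derive_unique; unfold ham; auto_derive; [easy | field]. Qed.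

Lemma XHp_ham a b A B q p : XHp (ham a b A B) q p = - (b * q ^ 5 + A * q + B * q ^ 3).
Proof. unfold XHp; f_equal; apply is_derive_unique; unfold ham; auto_derive; [easy | field]. Qed.

Lemma J11_ham a b A B q p : J11 (ham a b A B) q p = 0.
Proof.
  unfold J11; rewrite (Derive_ext _ (fun _ => a * p)) by (intro; apply XHq_ham).
  apply Derive_const.
Qed.

Lemma J12_ham a b A B q p : J12 (ham a b A B) q p = a.
Proof.
  unfold J12; rewrite (Derive_ext _ (fun p' => a * p')) by (intro; apply XHq_ham).
  apply is_derive_unique; auto_derive; [easy | ring].
Qed.

Lemma J21_ham a b A B q p : J21 (ham a b A B) q p = - (5 * b * q ^ 4 + A + 3 * B * q ^ 2).
Proof.
  unfold J21; rewrite (Derive_ext _ (fun q' => - (b * q' ^ 5 + A * q' + B * q' ^ 3)))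
    by (intro; apply XHp_ham).
  apply is_derive_unique; auto_derive; [easy | ring].
Qed.

Lemma J22_ham a b A B q p : J22 (ham a b A B) q p = 0.
Proof.
  unfold J22; rewrite (Derive_ext _ (fun _ => - (b * q ^ 5 + A * q + B * q ^ 3)))
    by (intro; apply XHp_ham).
  apply Derive_const.
Qed.

Lemma singular_point_ham a b A B q p : a <> 0 ->
  singular_point (ham a b A B) q p <-> p = 0 /\ q * (b * q ^ 4 + B * q ^ 2 + A) = 0.
Proof.
  intros Ha; unfold singular_point; rewrite XHq_ham, XHp_ham; split.
  - intros [Ep Eq]; split; [| lra].
    destruct (Rmult_integral _ _ Ep); [contradiction | assumption].
  - intros [-> Eq]; split; lra.
Qed.

Lemma ham_eigenvalue_sq a b A B q l : a <> 0 -> b * q ^ 4 + B * q ^ 2 + A = 0 ->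
  lin_eigenvalue (ham a b A B) q 0 l ->
  (l * l = RtoC (- 2 * q ^ 2 * (a * (2 * b * q ^ 2 + B))))%C.
Proof.
  intros Ha E Hl.
  assert (H12 : J12 (ham a b A B) q 0 <> 0) by (now rewrite J12_ham).
  rewrite (lin_eigenvalue_sq _ _ _ _ (J11_ham _ _ _ _ _ _) (J22_ham _ _ _ _ _ _) H12 Hl).
  rewrite J12_ham, J21_ham; f_equal.
  replace A with (- (b * q ^ 4 + B * q ^ 2)) by lra; ring.
Qed.

Lemma ham_centre a b A B q : a <> 0 -> q <> 0 -> b * q ^ 4 + B * q ^ 2 + A = 0 ->
  0 < a * (2 * b * q ^ 2 + B) -> is_centre (ham a b A B) q 0.
Proof.
  intros Ha Hq E S l Hl.
  apply (Cmul_self_neg_imaginary _ _ (ham_eigenvalue_sq _ _ _ _ _ _ Ha E Hl)).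
  assert (0 < q ^ 2) by (apply pow2_gt_0; easy). nra.
Qed.

Lemma ham_saddle a b A B q : a <> 0 -> q <> 0 -> b * q ^ 4 + B * q ^ 2 + A = 0 ->
  a * (2 * b * q ^ 2 + B) < 0 -> is_saddle (ham a b A B) q 0.
Proof.
  intros Ha Hq E S l Hl.
  apply (Cmul_self_pos_not_imaginary _ _ (ham_eigenvalue_sq _ _ _ _ _ _ Ha E Hl)).
  assert (0 < q ^ 2) by (apply pow2_gt_0; easy). nra.
Qed.

Lemma ham_origin_isolated a b A B q p : a <> 0 -> 0 < A * B -> Rabs b * q ^ 2 < Rabs B ->
  singular_point (ham a b A B) q p -> q = 0 /\ p = 0.
Proof.
  intros Ha HAB Hq Hsing; apply singular_point_ham in Hsing as [-> E]; [| easy].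
  split; [| easy]; destruct (Req_dec q 0) as [| Hq0]; [easy | exfalso].
  assert (Hroot : b * q ^ 4 + B * q ^ 2 + A = 0)
    by (destruct (Rmult_integral _ _ E); [contradiction | easy]).
  assert (Hq2 : 0 < q ^ 2) by now apply pow2_gt_0.
  (* B times the root equation is dominated by its positive term B^2 q^2 *)
  assert (Hdom : Rabs (b * B * q ^ 4) < B * B * q ^ 2).
  { assert (E4 : Rabs (q ^ 4) = q ^ 2 * q ^ 2)
      by (rewrite Rabs_pos_eq; [ring |];
          replace (q ^ 4) with ((q ^ 2) ^ 2) by ring; apply pow2_ge_0).
    assert (EB : B * B = Rabs B * Rabs B)
      by (rewrite <- Rabs_mult; symmetry; apply Rabs_pos_eq; nra).
    assert (HB : 0 < Rabs B) by (apply Rabs_pos_lt; intros ->; lra).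
    rewrite !Rabs_mult, E4, EB.
    apply (Rmult_lt_compat_r (Rabs B * q ^ 2)) in Hq; [nra | nra]. }
  apply Rabs_def2 in Hdom as [_ Hdom].
  assert (B * (b * q ^ 4 + B * q ^ 2 + A) = b * B * q ^ 4 + B * B * q ^ 2 + A * B) by ring.
  rewrite Hroot in H; lra.
Qed.

Lemma ham_new_singularity (kind : (R -> R -> R) -> R -> R -> Prop) a b c A B X1 : a <> 0 ->
  (forall q, q <> 0 -> b * q ^ 4 + B * q ^ 2 + A = 0 -> 0 < c * (2 * b * q ^ 2 + B) ->
     kind (ham a b A B) q 0) ->
  c * A < 0 -> 0 < c * B -> 0 < X1 -> 4 * Rabs b * X1 <= Rabs B -> 2 * Rabs A < Rabs B * X1 ->
  exists q, 0 < q /\ q ^ 2 <= X1 /\ singular_point (ham a b A B) q 0 /\ kind (ham a b A B) q 0.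
Proof.
  intros Ha Hkind HA HB HX1 Hb HAX.
  destruct (quadratic_small_root b A B X1) as [X [HX [Hroot Hsign]]]; try easy.
  { assert ((c * A) * (c * B) < 0) by nra. nra. }
  set (q := sqrt X).
  assert (Hq2 : q ^ 2 = X) by (apply pow2_sqrt; lra).
  assert (Hq4 : q ^ 4 = X ^ 2) by (rewrite <- Hq2; ring).
  assert (Hq : 0 < q) by (apply sqrt_lt_R0; lra).
  exists q; split; [easy |]; split; [lra |]; split.
  - apply singular_point_ham; [easy |]; split; [easy |].
    rewrite Hq4, Hq2, Hroot; ring.
  - apply Hkind; [lra | rewrite Hq4, Hq2; lra | rewrite Hq2].
    assert (0 < (c * B) * (B * (2 * b * X + B))) by (apply Rmult_lt_0_compat; easy).
    nra.
Qed.

(** * Stability of the origin *)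

Lemma ham_energy_bounds a b A B : 0 < a * A ->
  exists r m C, 0 < r /\ 0 < m /\
    forall x y, x ^ 2 + y ^ 2 <= r ->
      m * (x ^ 2 + y ^ 2) <= a * ham a b A B x y <= C * (x ^ 2 + y ^ 2).
Proof.
  intros HA.
  destruct (higher_order_dominated (a * A / 4) (a * B / 4) (a * b / 6)) as [r [[Hr _] Hdom]];
    [lra |].
  exists r, (Rmin (a * a / 2) (a * A / 4)), (a * a / 2 + a * A).
  split; [easy |]; split; [apply Rmin_pos; nra |].
  intros x y Hxy.
  assert (Hy : 0 <= y ^ 2) by apply pow2_ge_0.
  assert (Hx : 0 <= x ^ 2 <= r) by (pose proof (pow2_ge_0 x); lra).
  specialize (Hdom _ Hx); apply Rabs_le_between in Hdom.
  replace (a * ham a b A B x y)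
    with (a * a / 2 * y ^ 2 + a * A / 2 * x ^ 2
          + (a * B / 4 * (x ^ 2) ^ 2 + a * b / 6 * (x ^ 2) ^ 3))
    by (unfold ham; field).
  pose proof (Rmin_l (a * a / 2) (a * A / 4)); pose proof (Rmin_r (a * a / 2) (a * A / 4)).
  nra.
Qed.

Lemma ham_conserved a b A B T q p : is_solution (ham a b A B) T q p ->
  forall t, 0 <= t <= T -> ham a b A B (q t) (p t) = ham a b A B (q 0) (p 0).
Proof.
  intros Hs; apply (constant_of_derive_zero (fun s => ham a b A B (q s) (p s))).
  intros t Ht; destruct (Hs t Ht) as [Dq Dp]; rewrite XHq_ham in Dq; rewrite XHp_ham in Dp.
  unfold ham; auto_derive.
  - repeat split; eexists; eassumption.
  - replace (Derive (fun x => q x) t) with (a * p t) by (symmetry; now apply is_derive_unique).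
    replace (Derive (fun x => p x) t) with (- (b * q t ^ 5 + A * q t + B * q t ^ 3))
      by (symmetry; now apply is_derive_unique).
    field.
Qed.

Lemma ham_lyap_stable a b A B : 0 < a * A -> lyap_stable (ham a b A B) 0 0.
Proof.
  intros HA; destruct (ham_energy_bounds a b A B HA) as [r [m [C [Hr [Hm HV]]]]].
  apply (lyap_stable_of_conserved _ (fun x y => a * ham a b A B x y) r m C Hr Hm HV).
  intros T q p Hs t Ht; f_equal; now apply (ham_conserved _ _ _ _ T).
Qed.

(* On the energy level [ham a b A B q p = 0] one has [p = a * sqrt (zero_level a b A B q)]
   up to sign. *)
Definition zero_level (a b A B x : R) : R :=
  - (A / a ^ 3) * x ^ 2 - B / (2 * a ^ 3) * x ^ 4 - b / (3 * a ^ 3) * x ^ 6.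

Lemma zero_level_bounds a b A B : a <> 0 -> a * A < 0 ->
  exists rho k, 0 < rho /\ 0 < k /\
    forall x, Rabs x < rho -> k / 2 * x ^ 2 <= zero_level a b A B x <= 3 * k / 2 * x ^ 2.
Proof.
  intros Ha HA; set (k := - (A / a ^ 3)).
  assert (Hk : 0 < k).
  { unfold k; replace (- (A / a ^ 3)) with (- (a * A) / (a ^ 2) ^ 2) by (field; easy).
    apply Rdiv_lt_0_compat; [lra | apply pow2_gt_0, pow_nonzero, Ha]. }
  destruct (higher_order_dominated (k / 2) (- (B / (2 * a ^ 3))) (- (b / (3 * a ^ 3))))
    as [r [[Hr _] Hdom]]; [lra |].
  exists (sqrt r), k; split; [now apply sqrt_lt_R0 |]; split; [easy |].
  intros x Hx.
  assert (Hx2 : 0 <= x ^ 2 <= r).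
  { split; [apply pow2_ge_0 |].
    pose proof (sqrt_sqrt r (Rlt_le _ _ Hr)); pose proof (Rabs_pos x).
    rewrite <- pow2_abs; nra. }
  specialize (Hdom (x ^ 2) Hx2); apply Rabs_le_between in Hdom.
  replace (zero_level a b A B x)
    with (k * x ^ 2 + (- (B / (2 * a ^ 3)) * (x ^ 2) ^ 2 + - (b / (3 * a ^ 3)) * (x ^ 2) ^ 3))
    by (unfold zero_level, k; ring).
  lra.
Qed.

Lemma ham_zero_level_solution a b A B T (y : R -> R) : a <> 0 ->
  (forall t, 0 <= t <= T ->
     0 < zero_level a b A B (y t) /\ is_derive y t (a ^ 2 * sqrt (zero_level a b A B (y t)))) ->
  is_solution (ham a b A B) T y (fun t => a * sqrt (zero_level a b A B (y t))).
Proof.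
  intros Ha Hy t Ht; destruct (Hy t Ht) as [Hg Dy]; rewrite XHq_ham, XHp_ham; split.
  - replace (a * (a * sqrt (zero_level a b A B (y t))))
      with (a ^ 2 * sqrt (zero_level a b A B (y t))) by ring.
    exact Dy.
  - assert (Hs : sqrt (zero_level a b A B (y t)) <> 0) by (apply Rgt_not_eq, sqrt_lt_R0, Hg).
    assert (Dg : is_derive (zero_level a b A B) (y t)
                   (- 2 * (b * y t ^ 5 + A * y t + B * y t ^ 3) / a ^ 3))
      by (unfold zero_level; auto_derive; [easy | field; easy]).
    set (g := zero_level a b A B) in *.
    auto_derive; [repeat split; [eexists; eassumption | eexists; eassumption | easy] |].
    replace (Derive (fun x => y x) t) with (a ^ 2 * sqrt (g (y t)))
      by (symmetry; now apply is_derive_unique).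
    replace (Derive (fun x => g x) (y t)) with (- 2 * (b * y t ^ 5 + A * y t + B * y t ^ 3) / a ^ 3)
      by (symmetry; now apply is_derive_unique).
    field; easy.
Qed.

Lemma ham_not_lyap_stable a b A B : a <> 0 -> a * A < 0 -> ~ lyap_stable (ham a b A B) 0 0.
Proof.
  intros Ha HA; set (g := zero_level a b A B).
  destruct (zero_level_bounds a b A B Ha HA) as [rho [k [Hrho [Hk Hg]]]]; fold g in Hg.
  assert (Ha2 : 0 < a ^ 2) by now apply pow2_gt_0.
  assert (Hpos : forall x, 0 < x < rho -> 0 < g x).
  { intros x Hx; destruct (Hg x) as [Hlow _]; [rewrite Rabs_right; lra |].
    assert (0 < x ^ 2) by (apply pow_lt; lra). nra. }
  apply (not_lyap_stable_of_escape _ (rho / 2)); [lra |].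
  intros delta Hdelta.
  (* escape along the zero energy level, starting from (x0, a * sqrt (g x0)) *)
  set (c := 1 + a ^ 2 * (3 * k / 2)).
  assert (Hc : 1 <= c) by (unfold c; nra).
  set (x0 := Rmin (rho / 4) (delta / (2 * c))).
  assert (Hx0 : 0 < x0) by (apply Rmin_pos; [lra | apply Rdiv_lt_0_compat; lra]).
  assert (Hx0rho : x0 <= rho / 4) by apply Rmin_l.
  assert (Hx0delta : x0 * (2 * c) <= delta).
  { replace delta with (delta / (2 * c) * (2 * c)) by (field; lra).
    apply Rmult_le_compat_r; [lra | apply Rmin_r]. }
  destruct (autonomous_ode_solution (fun x => a ^ 2 * sqrt (g x)) 0 rho x0 (rho / 2))
    as [T [y [HT [Hy0 [HyT Hy]]]]]; try lra.
  { intros x Hx; pose proof (Hpos x Hx) as Hgx; split.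
    - apply Rmult_lt_0_compat; [easy | now apply sqrt_lt_R0].
    - apply (ex_derive_continuous (fun x => a ^ 2 * sqrt (g x))).
      unfold g, zero_level in *; auto_derive; easy. }
  exists T, y, (fun t => a * sqrt (g (y t))); split; [lra |]; split; [| split].
  - apply ham_zero_level_solution; [easy |].
    intros t Ht; destruct (Hy t Ht) as [Hyt Dy]; split; [apply Hpos |]; easy.
  - rewrite Hy0, <- (sqrt_pow2 delta) by lra; apply dist2_origin_lt_sqrt.
    assert (Hgx0 : 0 < g x0) by (apply Hpos; lra).
    replace ((a * sqrt (g x0)) ^ 2) with (a ^ 2 * g x0)
      by (rewrite Rpow_mult_distr, pow2_sqrt; lra).
    destruct (Hg x0) as [_ Hup]; [rewrite Rabs_right; lra |].
    assert (x0 ^ 2 + a ^ 2 * g x0 <= c * x0 ^ 2) by (unfold c; nra).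
    assert (c * x0 ^ 2 <= x0 * delta / 2) by nra.
    nra.
  - rewrite HyT, Rabs_right; lra.
Qed.

(** * Flip bifurcations of the normal form *)

Section FlipFamily.

Variables (a b c : R) (n1 n2 : R -> R) (j0 s eta D B0 : R).
Hypotheses (Ha : a <> 0) (Hb : b <> 0) (Hs : s = 1 \/ s = -1) (HB0 : 0 < B0).
Hypothesis Hn1_before : forall j, - eta < s * (j - j0) < 0 -> 0 < c * n1 j.
Hypothesis Hn1_after : forall j, 0 < s * (j - j0) < eta ->
  c * n1 j < 0 /\ Rabs (n1 j) <= 2 * Rabs D * Rabs (j - j0).
Hypothesis Hn2 : forall j, Rabs (j - j0) < eta -> 0 < c * n2 j /\ B0 / 2 <= Rabs (n2 j).

Lemma flip_origin_isolated j : - eta < s * (j - j0) < 0 ->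
  forall q p, dist2 q p 0 0 < sqrt (B0 / (2 * Rabs b)) ->
    singular_point (ham a b (n1 j) (n2 j)) q p -> q = 0 /\ p = 0.
Proof.
  intros Hj q p Hqp Hsing.
  assert (Hbabs : 0 < Rabs b) by now apply Rabs_pos_lt.
  pose proof (Hn1_before j Hj) as HA.
  destruct (Hn2 j) as [HB HBj]; [rewrite <- (Rabs_sign_mult s), Rabs_left by easy; lra |].
  apply (ham_origin_isolated a b (n1 j) (n2 j) q p Ha); try easy.
  - assert (Hcc : 0 < (c * c) * (n1 j * n2 j)).
    { replace ((c * c) * (n1 j * n2 j)) with ((c * n1 j) * (c * n2 j)) by ring.
      now apply Rmult_lt_0_compat. }
    assert (0 <= c * c) by apply Rle_0_sqr.
    destruct (Rle_lt_dec (n1 j * n2 j) 0); [nra | easy].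
  - apply dist2_origin_lt_sqrt in Hqp.
    assert (q ^ 2 * (2 * Rabs b) < B0).
    { replace B0 with (B0 / (2 * Rabs b) * (2 * Rabs b)) by (field; lra).
      apply Rmult_lt_compat_r; [lra |]. pose proof (pow2_ge_0 p); lra. }
    lra.
Qed.

Lemma flip_new_singularity (kind : (R -> R -> R) -> R -> R -> Prop) :
  (forall A B q, q <> 0 -> b * q ^ 4 + B * q ^ 2 + A = 0 -> 0 < c * (2 * b * q ^ 2 + B) ->
     kind (ham a b A B) q 0) ->
  D <> 0 -> 0 < eta ->
  forall eps, 0 < eps -> exists delta, 0 < delta /\
    forall j, 0 < s * (j - j0) < delta ->
      exists q p, ~ (q = 0 /\ p = 0) /\ dist2 q p 0 0 < eps /\
        singular_point (ham a b (n1 j) (n2 j)) q p /\ kind (ham a b (n1 j) (n2 j)) q p.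
Proof.
  intros Hkind HD Heta eps Heps.
  assert (Hbabs : 0 < Rabs b) by now apply Rabs_pos_lt.
  assert (HDabs : 0 < Rabs D) by now apply Rabs_pos_lt.
  set (X1 := Rmin (eps ^ 2 / 2) (B0 / (8 * Rabs b))).
  assert (HX1 : 0 < X1) by (apply Rmin_pos; apply Rdiv_lt_0_compat; try apply pow_lt; lra).
  assert (HX1eps : X1 <= eps ^ 2 / 2) by apply Rmin_l.
  assert (HX1b : X1 * (8 * Rabs b) <= B0).
  { replace B0 with (B0 / (8 * Rabs b) * (8 * Rabs b)) by (field; lra).
    apply Rmult_le_compat_r; [lra | apply Rmin_r]. }
  set (del := Rmin eta (B0 * X1 / (8 * Rabs D))).
  assert (Hdel : del <= eta) by apply Rmin_l.
  assert (Hdel' : del <= B0 * X1 / (8 * Rabs D)) by apply Rmin_r.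
  exists del; split.
  { apply Rmin_pos; [easy | apply Rdiv_lt_0_compat; [apply Rmult_lt_0_compat |]; lra]. }
  intros j Hj.
  assert (Hjr : Rabs (j - j0) * (8 * Rabs D) < B0 * X1).
  { rewrite <- (Rabs_sign_mult s), Rabs_right by (easy || lra).
    apply (Rlt_le_trans _ (B0 * X1 / (8 * Rabs D) * (8 * Rabs D))); [| right; field; lra].
    apply Rmult_lt_compat_r; lra. }
  destruct (Hn1_after j) as [HA HAbnd]; [lra |].
  destruct (Hn2 j) as [HB HBj]; [rewrite <- (Rabs_sign_mult s), Rabs_right by (easy || lra); lra |].
  destruct (ham_new_singularity kind a b c (n1 j) (n2 j) X1 Ha (Hkind (n1 j) (n2 j)) HA HB HX1)
    as [q [Hq [HqX1 [Hsing Hk]]]]; [lra | |].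
  { assert (B0 / 2 * X1 <= Rabs (n2 j) * X1) by (apply Rmult_le_compat_r; lra). lra. }
  exists q, 0; split; [intros [E _]; lra |]; split; [| easy].
  assert (0 < eps ^ 2) by (apply pow_lt; lra).
  rewrite <- (sqrt_pow2 eps) by lra; apply dist2_origin_lt_sqrt.
  replace (0 ^ 2) with 0 by ring; lra.
Qed.

End FlipFamily.

Lemma flip_type_ham (stable_before : bool) (kind : (R -> R -> R) -> R -> R -> Prop)
    (a b c : R) (n1 n2 : R -> R) (j0 D : R) :
  a <> 0 -> b <> 0 -> c <> 0 ->
  (forall A B, 0 < c * A ->
     if stable_before then lyap_stable (ham a b A B) 0 0 else ~ lyap_stable (ham a b A B) 0 0) ->
  (forall A B, c * A < 0 ->
     if stable_before then ~ lyap_stable (ham a b A B) 0 0 else lyap_stable (ham a b A B) 0 0) ->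
  (forall A B q, q <> 0 -> b * q ^ 4 + B * q ^ 2 + A = 0 -> 0 < c * (2 * b * q ^ 2 + B) ->
     kind (ham a b A B) q 0) ->
  is_derive n1 j0 D -> D <> 0 -> n1 j0 = 0 -> continuous n2 j0 -> 0 < c * n2 j0 ->
  flip_type stable_before kind (fun j => ham a b (n1 j) (n2 j)) j0.
Proof.
  intros Ha Hb Hc Hbefore Hafter Hkind Hd HD H10 Hc2 Hn2.
  destruct (sign_change_at_simple_zero n1 j0 D c Hd HD H10 Hc)
    as [s [eta1 [Hs [Heta1 [Hn1b Hn1a]]]]].
  destruct (sign_persists n2 j0 c Hc2 Hn2) as [eta2 [Heta2 Hn2near]].
  set (B0 := Rabs (n2 j0)).
  assert (HB0 : 0 < B0) by (apply Rabs_pos_lt; intros E; rewrite E in Hn2; lra).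
  set (eta := Rmin eta1 eta2).
  assert (Heta : 0 < eta) by now apply Rmin_pos.
  assert (Hetae1 : eta <= eta1) by apply Rmin_l.
  assert (Hetae2 : eta <= eta2) by apply Rmin_r.
  assert (Hn1b' : forall j, - eta < s * (j - j0) < 0 -> 0 < c * n1 j)
    by (intros j Hj; apply Hn1b; lra).
  assert (Hn1a' : forall j, 0 < s * (j - j0) < eta ->
            c * n1 j < 0 /\ Rabs (n1 j) <= 2 * Rabs D * Rabs (j - j0))
    by (intros j Hj; apply Hn1a; lra).
  assert (Hn2' : forall j, Rabs (j - j0) < eta -> 0 < c * n2 j /\ B0 / 2 <= Rabs (n2 j))
    by (intros j Hj; apply Hn2near; lra).
  exists s; split; [easy |]; exists eta, (sqrt (B0 / (2 * Rabs b))).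
  split; [easy |]; split.
  { apply sqrt_lt_R0, Rdiv_lt_0_compat; [| apply Rmult_lt_0_compat; [| apply Rabs_pos_lt]]; lra. }
  split; [| split].
  - intros j Hj; split; [apply Hbefore, Hn1b', Hj |].
    eapply flip_origin_isolated with (c := c) (eta := eta) (B0 := B0); eassumption.
  - intros j Hj; apply Hafter, Hn1a', Hj.
  - eapply flip_new_singularity with (c := c) (D := D) (eta := eta) (B0 := B0); eassumption.
Qed.

(** * The fold of [nu1] at the origin *)

Lemma smooth2_is_derive_1 f ds : smooth2 f -> forall x y,
  is_derive (fun x' => iter_partial ds f x' y) x (iter_partial (false :: ds) f x y).
Proof. intros Hf x y; apply Derive_correct, (Hf ds x y). Qed.

Lemma smooth2_is_derive_2 f ds : smooth2 f -> forall x y,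
  is_derive (fun y' => iter_partial ds f x y') y (iter_partial (true :: ds) f x y).
Proof. intros Hf x y; apply Derive_correct, (Hf ds x y). Qed.

Lemma smooth2_near_origin f ds : smooth2 f -> forall eps, 0 < eps ->
  exists delta, 0 < delta /\ forall u v, Rabs u < delta -> Rabs v < delta ->
    Rabs (iter_partial ds f u v - iter_partial ds f 0 0) < eps.
Proof.
  intros Hf eps Heps; destruct (Hf ds 0 0) as [_ [_ Hc]].
  apply (continuity_2d_pt_filterlim (iter_partial ds f) 0 0) in Hc.
  destruct (Hc (mkposreal eps Heps)) as [delta Hdelta].
  exists delta; split; [apply cond_pos |]; intros u v Hu Hv.
  apply Hdelta; rewrite Rminus_0_r; easy.
Qed.

Section FoldZero.

Variable f : R -> R -> R.
Hypothesis Hf : smooth2 f.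

Local Notation fj := (iter_partial (false :: nil) f).
Local Notation ft := (iter_partial (true :: nil) f).
Local Notation fjj := (iter_partial (false :: false :: nil) f).
Local Notation fjt := (iter_partial (true :: false :: nil) f).

Lemma smooth2_box_bounds : fjj 0 0 <> 0 -> ft 0 0 <> 0 ->
  exists r M, 0 < r /\ 0 < M /\
    (forall u v, Rabs u < r -> Rabs v < r ->
       Rabs (fjj 0 0) / 2 <= Rabs (fjj u v) <= 2 * Rabs (fjj 0 0)) /\
    (forall u v, Rabs u < r -> Rabs v < r -> Rabs (ft 0 0) / 2 <= Rabs (ft u v)) /\
    (forall u v, Rabs u < r -> Rabs v < r -> Rabs (fjt u v) <= M).
Proof.
  intros Hc Hd.
  destruct (smooth2_near_origin f (false :: false :: nil) Hf (Rabs (fjj 0 0) / 2))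
    as [r1 [Hr1 Hjj]]; [apply Rabs_pos_lt in Hc; lra |].
  destruct (smooth2_near_origin f (true :: nil) Hf (Rabs (ft 0 0) / 2))
    as [r2 [Hr2 Ht]]; [apply Rabs_pos_lt in Hd; lra |].
  destruct (smooth2_near_origin f (true :: false :: nil) Hf 1) as [r3 [Hr3 Hjt]]; [lra |].
  set (r := Rmin r1 (Rmin r2 r3)).
  assert (Hr : r <= r1 /\ r <= r2 /\ r <= r3).
  { pose proof (Rmin_l r1 (Rmin r2 r3)); pose proof (Rmin_r r1 (Rmin r2 r3)).
    pose proof (Rmin_l r2 r3); pose proof (Rmin_r r2 r3); unfold r; lra. }
  exists r, (Rabs (fjt 0 0) + 1).
  split; [repeat apply Rmin_pos; easy |].
  split; [pose proof (Rabs_pos (fjt 0 0)); lra |].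
  split; [| split]; intros u v Hu Hv.
  - apply Rabs_half_close, Hjj; lra.
  - apply Rabs_half_close, Ht; lra.
  - specialize (Hjt u v ltac:(lra) ltac:(lra)).
    pose proof (Rabs_triang_inv (fjt u v) (fjt 0 0)); lra.
Qed.

Section SingularZero.

Variables (r c d M tau j0 : R).
Hypothesis Hjj : forall u v, Rabs u < r -> Rabs v < r ->
  Rabs c / 2 <= Rabs (fjj u v) <= 2 * Rabs c.
Hypothesis Ht : forall u v, Rabs u < r -> Rabs v < r -> Rabs d / 2 <= Rabs (ft u v).
Hypothesis Hjt : forall u v, Rabs u < r -> Rabs v < r -> Rabs (fjt u v) <= M.
Hypotheses (H00 : f 0 0 = 0) (H10 : fj 0 0 = 0) (Htau : Rabs tau < r) (Hj0 : Rabs j0 < r).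
Hypotheses (Hz : f j0 tau = 0) (Hzj : fj j0 tau = 0).

Lemma singular_zero_j_bound : Rabs c * Rabs j0 <= 2 * M * Rabs tau.
Proof.
  pose proof (Rabs_pos tau); pose proof (Rabs_pos j0).
  assert (Hfj0 : Rabs (fj 0 tau) <= M * Rabs tau).
  { pose proof (MVT_Rabs_le (fun v => fj 0 v) (fjt 0) 0 tau (Rabs tau) M) as Hm.
    cbv beta in Hm; rewrite Rminus_0_r, H10, Rminus_0_r in Hm.
    apply Hm; [rewrite Rabs_R0; lra | lra | apply smooth2_is_derive_2, Hf |].
    intros v Hv; apply Hjt; rewrite ?Rabs_R0; lra. }
  assert (Hfjj : Rabs c / 2 * Rabs j0 <= Rabs (fj 0 tau)).
  { pose proof (MVT_Rabs_ge (fun u => fj u tau) (fun u => fjj u tau) 0 j0 (Rabs j0) (Rabs c / 2))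
      as Hm.
    cbv beta in Hm; rewrite Rminus_0_r, Hzj, Rminus_0_l, Rabs_Ropp in Hm.
    apply Hm; [rewrite Rabs_R0; lra | lra | intros; apply smooth2_is_derive_1, Hf |].
    intros u Hu; apply Hjj; lra. }
  lra.
Qed.

Lemma singular_zero_tau_bound : Rabs d * Rabs tau <= 8 * Rabs c * j0 ^ 2.
Proof.
  pose proof (Rabs_pos tau); pose proof (Rabs_pos j0).
  assert (Hfj : forall u, Rabs u <= Rabs j0 -> Rabs (fj u tau) <= 4 * Rabs c * Rabs j0).
  { intros u Hu.
    pose proof (MVT_Rabs_le (fun u => fj u tau) (fun u => fjj u tau) u j0 (Rabs j0) (2 * Rabs c))
      as Hm.
    cbv beta in Hm; rewrite Hzj, Rminus_0_l, Rabs_Ropp in Hm.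
    eapply Rle_trans; [apply Hm; [easy | lra | intros; apply smooth2_is_derive_1, Hf |] |].
    - intros x Hx; apply Hjj; lra.
    - assert (Rabs (j0 - u) <= 2 * Rabs j0)
        by (pose proof (Rabs_triang j0 (- u)); rewrite Rabs_Ropp in *; unfold Rminus; lra).
      replace (4 * Rabs c * Rabs j0) with (2 * Rabs c * (2 * Rabs j0)) by ring.
      apply Rmult_le_compat_l; [pose proof (Rabs_pos c); lra | easy]. }
  assert (Hf0 : Rabs (f 0 tau) <= 4 * Rabs c * Rabs j0 * Rabs j0).
  { pose proof (MVT_Rabs_le (fun u => f u tau) (fun u => fj u tau) 0 j0 (Rabs j0)
                  (4 * Rabs c * Rabs j0)) as Hm.
    cbv beta in Hm; rewrite Rminus_0_r, Hz, Rminus_0_l, Rabs_Ropp in Hm.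
    apply Hm; [rewrite Rabs_R0; lra | lra | intros; apply (smooth2_is_derive_1 f nil Hf) | easy]. }
  assert (Hft : Rabs d / 2 * Rabs tau <= Rabs (f 0 tau)).
  { pose proof (MVT_Rabs_ge (fun v => f 0 v) (ft 0) 0 tau (Rabs tau) (Rabs d / 2)) as Hm.
    cbv beta in Hm; rewrite Rminus_0_r, H00, Rminus_0_r in Hm.
    apply Hm; [rewrite Rabs_R0; lra | lra | apply (smooth2_is_derive_2 f nil Hf) |].
    intros v Hv; apply Ht; rewrite ?Rabs_R0; lra. }
  rewrite <- pow2_abs; lra.
Qed.

End SingularZero.

Lemma smooth2_zero_set_nondegenerate : f 0 0 = 0 -> fj 0 0 = 0 -> fjj 0 0 <> 0 -> ft 0 0 <> 0 ->
  exists eps, 0 < eps /\ forall tau j0, 0 < Rabs tau < eps -> Rabs j0 < eps ->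
    f j0 tau = 0 -> fj j0 tau <> 0.
Proof.
  intros H00 H10 Hc Hd.
  destruct (smooth2_box_bounds Hc Hd) as [r [M [Hr [HM [Hjj [Ht Hjt]]]]]].
  set (c := fjj 0 0) in *; set (d := ft 0 0) in *.
  assert (Hcabs : 0 < Rabs c) by now apply Rabs_pos_lt.
  assert (Hdabs : 0 < Rabs d) by now apply Rabs_pos_lt.
  assert (HM2 : 0 < 32 * M ^ 2) by (apply Rmult_lt_0_compat; [lra | apply pow_lt; lra]).
  set (eps := Rmin r (Rabs c * Rabs d / (32 * M ^ 2))).
  exists eps; split.
  { apply Rmin_pos; [| apply Rdiv_lt_0_compat; [apply Rmult_lt_0_compat |]]; easy. }
  intros tau j0 [Htau0 Htau] Hj0 Hz Hzj.
  assert (Heps : eps <= r) by apply Rmin_l.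
  assert (Htau' : Rabs tau * (32 * M ^ 2) < Rabs c * Rabs d).
  { apply (Rlt_le_trans _ (eps * (32 * M ^ 2))); [apply Rmult_lt_compat_r; lra |].
    replace (Rabs c * Rabs d) with (Rabs c * Rabs d / (32 * M ^ 2) * (32 * M ^ 2))
      by (field; lra).
    apply Rmult_le_compat_r; [lra | apply Rmin_r]. }
  assert (E1 : Rabs c * Rabs j0 <= 2 * M * Rabs tau)
    by (eapply (singular_zero_j_bound r); first [eassumption | lra]).
  assert (E2 : Rabs d * Rabs tau <= 8 * Rabs c * j0 ^ 2)
    by (eapply (singular_zero_tau_bound r); first [eassumption | lra]).
  (* the two bounds force |tau| >= |c| |d| / (32 M^2) *)
  assert (Hsq : (Rabs c * Rabs j0) ^ 2 <= (2 * M * Rabs tau) ^ 2)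
    by (apply pow_incr; split; [apply Rmult_le_pos; apply Rabs_pos | easy]).
  assert (Rabs c * (Rabs d * Rabs tau) <= 32 * M ^ 2 * Rabs tau * Rabs tau).
  { apply (Rle_trans _ (8 * (Rabs c * Rabs j0) ^ 2)); [| lra].
    replace (8 * (Rabs c * Rabs j0) ^ 2) with (Rabs c * (8 * Rabs c * j0 ^ 2))
      by (rewrite <- pow2_abs; ring).
    apply Rmult_le_compat_l; lra. }
  assert (Rabs tau * (32 * M ^ 2) * Rabs tau < Rabs c * Rabs d * Rabs tau)
    by (apply Rmult_lt_compat_r; lra).
  lra.
Qed.

End FoldZero.


Theorem lemma2p3 (a b : R) (nu1 nu2 : R -> R -> R) :
  a <> 0 -> b <> 0 ->
  smooth2 nu1 -> smooth2 nu2 ->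
  nu1 0 0 = 0 ->
  Derive (fun j => nu1 j 0) 0 = 0 ->
  Derive (fun j => Derive (fun j' => nu1 j' 0) j) 0 <> 0 ->
  Derive (fun t => nu1 0 t) 0 <> 0 ->
  exists eps : R, 0 < eps /\
    forall tau j0 : R, 0 < Rabs tau < eps -> Rabs j0 < eps ->
      nu1 j0 tau = 0 -> nu2 j0 tau <> 0 ->
      (a * nu2 j0 tau < 0 -> dual_hamiltonian_flip (Hfam a b nu1 nu2 tau) j0) /\
      (a * nu2 j0 tau > 0 -> hamiltonian_flip (Hfam a b nu1 nu2 tau) j0).
Proof.
  intros Ha Hb Hs1 Hs2 H00 H10 Hc Hd.
  destruct (smooth2_zero_set_nondegenerate nu1 Hs1 H00 H10 Hc Hd) as [eps [Heps Hnondeg]].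
  exists eps; split; [easy |]; intros tau j0 Htau Hj0 Hz _.
  set (D := Derive (fun j => nu1 j tau) j0).
  assert (HD : D <> 0) by now apply Hnondeg.
  pose proof (smooth2_is_derive_1 nu1 nil Hs1 j0 tau : is_derive (fun j => nu1 j tau) j0 D) as Hder.
  assert (Hcont : continuous (fun j => nu2 j tau) j0)
    by apply (ex_derive_continuous (fun j => nu2 j tau)), (Hs2 nil j0 tau).
  split; intros Hsign.
  - apply (flip_type_ham false is_saddle a b (- a) (fun j => nu1 j tau) (fun j => nu2 j tau) j0 D);
      try easy; try lra.
    + intros A B HA; apply ham_not_lyap_stable; lra.
    + intros A B HA; apply ham_lyap_stable; lra.
    + intros A B q Hq E S; apply ham_saddle; lra.
  - apply (flip_type_ham true is_centre a b a (fun j => nu1 j tau) (fun j => nu2 j tau) j0 D);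
      try easy; try lra.
    + intros A B HA; apply ham_lyap_stable; lra.
    + intros A B HA; apply ham_not_lyap_stable; lra.
    + intros A B q Hq E S; apply ham_centre; lra.
Qed.
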